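(* Let $k\geq 3$, $\chi\geq 2$, $t\geq k-1$ and $n\geq 3(k-1)$ be integers with $n\equiv 1\pmod{k-1}$. Let $H$ be the $k$-graph on vertex set $A_1\sqcup\dots\sqcup A_\chi$, where $|A_i|>(\chi-1)(k-2)+\tau(k-1,t)$ for all $i\in[\chi-1]$ and $|A_\chi|=t$, whose edges are all $k$-subsets $e$ of the vertex set such that $|e\cap A_i|=k-1$ for some $i\in[\chi]$. Then $R(P^{(k)}_{n,1},H)\geq (\chi-1)(n-1)+\tau(k-1,t)-2k+3$.
   Context: A $k$-graph is a $k$-uniform hypergraph. $R(G,H)$ is the least $N$ such that every red/blue colouring of the edges of $K^{(k)}_N$ contains a red copy of $G$ or a blue copy of $H$. The loose path $P^{(k)}_{n,1}$ ($n=q(k-1)+1$) has vertices $v_1,\dots,v_n$ and edges $\{v_{(i-1)(k-1)+1},\dots,v_{i(k-1)+1}\}$, $i\in[q]$. For integers $j,\alpha\ge1$, $\tau(j,\alpha)$ is the largest $N$ such that some $j$-uniform hypergraph on $N$ vertices has independence number less than $\alpha$ and no two edges meeting in exactly one vertex. *)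

From mathcomp Require Import all_boot.
Set Implicit Arguments. Unset Strict Implicit. Unset Printing Implicit Defensive.

Definition uniform (V : finType) (k : nat) (E : {set {set V}}) : Prop :=
  forall e, e \in E -> #|e| = k.

Definition indep (V : finType) (E : {set {set V}}) (S : {set V}) : bool :=
  [forall e in E, ~~ (e \subset S)].

Definition indep_num (V : finType) (E : {set {set V}}) : nat :=
  \max_(S : {set V} | indep E S) #|S|.

Definition no_one_intersection (V : finType) (E : {set {set V}}) : Prop :=
  forall e1 e2, e1 \in E -> e2 \in E -> e1 != e2 -> #|e1 :&: e2| != 1.

Definition tau_admissible (j alpha N : nat) : Prop :=
  exists E : {set {set 'I_N}},
    [/\ uniform j E, indep_num E < alpha & no_one_intersection E].

Definition is_tau (j alpha T : nat) : Prop :=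
  tau_admissible j alpha T /\ forall N, tau_admissible j alpha N -> N <= T.

(* Loose path P^{(k)}_{n,1} on vertices 'I_n (0-indexed): edges
   {i(k-1), ..., i(k-1)+(k-1)} for i < q = (n-1)/(k-1). *)
Definition loose_path (k n : nat) : {set {set 'I_n}} :=
  [set [set v : 'I_n | (i * (k-1) <= v) && (v <= i * (k-1) + (k-1))]
  | i : 'I_((n-1) %/ (k-1))].

(* The k-graph H: vertex set A_0 ⊔ ... ⊔ A_{chi-1} with |A_i| = a i,
   edges = all k-subsets meeting some A_i in exactly k-1 vertices. *)
Definition part_vertex (chi : nat) (a : 'I_chi -> nat) := {i : 'I_chi & 'I_(a i)}.

Definition part (chi : nat) (a : 'I_chi -> nat) (i : 'I_chi)
  : {set part_vertex a} := [set x : part_vertex a | tag x == i].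

Definition H_graph (k chi : nat) (a : 'I_chi -> nat) : {set {set part_vertex a}} :=
  [set e : {set part_vertex a} | (#|e| == k) &&
     [exists i : 'I_chi, #|e :&: part a i| == k - 1]].

(* Every red/blue colouring c of the k-subsets of 'I_N (c e = true: red)
   contains a red copy of G or a blue copy of Hh. *)
Definition ramsey_arrows (VG VH : finType) (G : {set {set VG}}) (Hh : {set {set VH}})
  (N : nat) : Prop :=
  forall c : {set 'I_N} -> bool,
    (exists f : VG -> 'I_N, injective f /\ forall e, e \in G -> c (f @: e) = true)
    \/ (exists g : VH -> 'I_N, injective g /\ forall e, e \in Hh -> c (g @: e) = false).

(* Colour the N vertices as follows: c = chi-2 clusters of n-1 vertices, a set B of n-2k+1
   vertices, and a set W of tau(k-1,t) vertices carrying a (k-1)-graph E with independence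
   number < t in which no two edges meet in exactly one vertex.  An edge is red if it lies in a
   single cluster, or in B, or consists of one vertex of B and an edge of E.

   A red loose path lives in one cluster, where n vertices do not fit, or in B + W.  There every
   vertex shared by two consecutive edges lies in B, as two red edges meeting in a single vertex
   of W would give two edges of E meeting in one vertex; so every inner edge has two vertices in
   B, hence lies in B, and B would have to hold the n-2k+2 inner vertices.

   In a blue copy of H, each of the first chi-1 parts is too large to have fewer than k-1
   vertices in every zone (cluster or B) and the rest in W, and two parts cannot both have k-1
   vertices in one zone (k-1 of them plus a vertex of the other part form a red edge of H).  So
   the chi-1 big parts claim all chi-1 zones, which pushes the last part into W.  Its t
   vertices contain an edge of E, and with a vertex of the part claiming B this is a red edge
   of H. *)

From mathcomp Require Import all_boot.
From mathcomp Require Import zify.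
Set Implicit Arguments. Unset Strict Implicit. Unset Printing Implicit Defensive.

Lemma card_bigcup_leq (T I : finType) (F : I -> {set T}) :
  #|\bigcup_i F i| <= \sum_i #|F i|.
Proof.
elim/big_rec2: _ => [|i A s _ IH]; first by rewrite cards0.
by rewrite (leq_trans (leq_card_setU _ _)) ?leq_add2l.
Qed.

Lemma exists_subset_card (T : finType) (A : {set T}) m :
  m <= #|A| -> exists2 S : {set T}, S \subset A & #|S| = m.
Proof.
case/card_geqP => s [s_uniq s_size sA]; exists [set x in s].
  by apply/subsetP => x; rewrite inE => /sA.
by rewrite cardsE (card_uniqP s_uniq).
Qed.

Lemma imset_preimset_sub (aT rT : finType) (f : aT -> rT) (A : {set aT})
    (B : {set rT}) :
  B \subset f @: A -> f @: (A :&: f @^-1: B) = B.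
Proof.
move=> /subsetP BfA; apply/setP => y; apply/imsetP/idP => [[x] | yB].
  by rewrite !inE => /andP [_ fxB] ->.
by have /imsetP [x xA yfx] := BfA y yB; exists x; rewrite // !inE xA -yfx.
Qed.

Lemma not_indep_of_card (V : finType) (E : {set {set V}}) (S : {set V}) :
  indep_num E < #|S| -> exists2 e, e \in E & e \subset S.
Proof.
move=> lt_S; have : ~~ indep E S.
  by apply: contraTN lt_S => /(leq_bigmax_cond (F := fun X : {set V} => #|X|)); rewrite leqNgt.
rewrite /indep negb_forall => /existsP [e].
by rewrite negb_imply negbK => /andP [eE eS]; exists e.
Qed.

Lemma card_part l (a : 'I_l -> nat) i : #|part a i| = a i.
Proof.
have -> : part a i = [set Tagged (fun j => 'I_(a j)) y | y : 'I_(a i)].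
  apply/setP => -[j y]; rewrite inE /=; apply/eqP/imsetP => [<- | [z _ /(congr1 tag)]] //.
  by exists y.
rewrite card_imset ?card_ord // => y1 y2 /(congr1 (tagged_as (Tagged (fun j => 'I_(a j)) y1))).
by rewrite !tagged_asE.
Qed.

Lemma H_graph_edge k l (a : 'I_l -> nat) i (S : {set part_vertex a}) x :
  S \subset part a i -> #|S| = k -> tag x != i -> x |: S \in H_graph k.+1 a.
Proof.
move=> S_i S_k x_i.
have xS : x \notin S by apply: contra x_i => /(subsetP S_i); rewrite inE.
rewrite inE cardsU1 xS S_k eqxx subn1 /=; apply/existsP; exists i.
have x_i0 : [set x] :&: part a i = set0.
  by apply/setP => y; rewrite !inE; apply: contraNF x_i => /andP [/eqP -> /eqP ->].
by rewrite setIUl x_i0 (setIidPl S_i) set0U S_k.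
Qed.

Section RedColouring.

Variables (U W Z : finType) (zone : U -> Z) (jB : Z) (K : nat) (E : {set {set W}}).

Definition zoned (v : U + W) : bool := if v is inl _ then true else false.

Definition red_class (v : U + W) : Z := if v is inl u then zone u else jB.

Definition zone_set j : {set U + W} := [set v | zoned v & red_class v == j].

(* [inl u] is a vertex of zone [zone u] and [inr w] a vertex of the copy of [E]; the zones
   are the clusters and [jB], which plays the role of B. *)
Definition red (e : {set U + W}) : bool :=
  [exists j, e \subset zone_set j] ||
  [exists u, [exists F in E, (zone u == jB) && (e == inl u |: [set inr w | w in F])]].

Lemma zone_set_class v : zoned v -> v \in zone_set (red_class v).
Proof. by move=> zv; rewrite inE zv eqxx. Qed.

Lemma card_zone_set j : #|zone_set j| = #|[set u | zone u == j]|.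
Proof.
rewrite -(card_imset _ (@inl_inj U W)); apply: eq_card => -[u | w].
  by rewrite mem_imset ?inE //; exact: inl_inj.
by rewrite inE; apply/esym/imsetP => -[].
Qed.

Lemma card_unzoned : #|[set v : U + W | ~~ zoned v]| = #|W|.
Proof.
rewrite -cardsT -(card_imset [set: W] (@inr_inj U W)); apply: eq_card => -[u | w].
  by rewrite inE; apply/esym/imsetP => -[].
by rewrite mem_imset ?inE //; exact: inr_inj.
Qed.

Lemma pigeonhole_zones (X : finType) (h : X -> U + W) (A : {set X}) m :
  injective h -> #|Z| * m + #|W| < #|A| -> exists j, m < #|A :&: h @^-1: zone_set j|.
Proof.
move=> h_inj; case: (pickP (fun j => m < #|A :&: h @^-1: zone_set j|)) => [j | small].
  by exists j.
rewrite ltnNge => /negP []; pose Wpart := A :&: h @^-1: [set v | ~~ zoned v].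
have cover : A \subset (\bigcup_j (A :&: h @^-1: zone_set j)) :|: Wpart.
  apply/subsetP => x xA; rewrite !inE xA /=.
  case zx: (zoned (h x)); last by rewrite orbT.
  by apply/orP; left; apply/bigcupP; exists (red_class (h x)); rewrite // !inE xA zx eqxx.
apply: (leq_trans (subset_leq_card cover)); apply: (leq_trans (leq_card_setU _ _)).
apply: leq_add.
  rewrite -sum_nat_const; apply: (leq_trans (card_bigcup_leq _)).
  by apply: leq_sum => j _; rewrite leqNgt small.
rewrite -card_unzoned -(card_imset _ h_inj); apply: subset_leq_card.
by apply/subsetP => _ /imsetP [x + ->]; rewrite !inE => /andP [].
Qed.

Lemma card_preim_inr (B : {set U + W}) :
  B \subset [set v | ~~ zoned v] -> #|inr @^-1: B| = #|B|.
Proof.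
move=> /subsetP B_W; rewrite -{2}(@imset_preimset_sub _ _ inr setT B).
  by rewrite setTI card_imset //; exact: inr_inj.
by apply/subsetP => -[u /B_W | w _]; rewrite ?inE // imset_f.
Qed.

Lemma red_class_eq e v v' : red e -> v \in e -> v' \in e -> red_class v = red_class v'.
Proof.
case/orP => [/existsP [j /subsetP e_j] | /existsP [u /existsP [F /and3P [_ /eqP zu /eqP ->]]]].
  by move=> /e_j + /e_j; rewrite !inE => /andP [_ /eqP ->] /andP [_ /eqP ->].
have class_jB y : y \in inl u |: [set inr w | w in F] -> red_class y = jB.
  by rewrite in_setU1 => /orP [/eqP -> // | /imsetP [w _ ->]].
by move=> /class_jB -> /class_jB ->.
Qed.

Lemma red_unzoned_edge e w : red e -> inr w \in e ->
  exists u, exists2 F, F \in E & e = inl u |: [set inr w | w in F].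
Proof.
case/orP => [/existsP [j /subsetP e_j] /e_j | /existsP [u /existsP [F /and3P [FE _ /eqP ->]]]].
  by rewrite inE.
by exists u, F.
Qed.

Lemma preim_inr_edge (u : U) (F : {set W}) : inr @^-1: (inl u |: [set inr w | w in F]) = F.
Proof.
apply/setP => w; rewrite !inE /= mem_imset //; exact: inr_inj.
Qed.

Hypotheses (K_gt1 : 1 < K) (E_unif : uniform K E) (E_meet : no_one_intersection E).

Let K_gt0 : 0 < K. Proof. exact: ltnW. Qed.

Lemma red_meet_zoned e e' v : red e -> red e' -> e :&: e' = [set v] -> zoned v.
Proof.
case: v => [//| w] red_e red_e' ee'.
have /setIP [we we'] : inr w \in e :&: e' by rewrite ee' set11.
have [u [F FE e_def]] := red_unzoned_edge red_e we.
have [u' [F' F'E e'_def]] := red_unzoned_edge red_e' we'.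
have FF' : F :&: F' = [set w].
  have := congr1 (fun A : {set U + W} => inr @^-1: A) ee'.
  rewrite /= preimsetI e_def e'_def !preim_inr_edge => ->.
  by apply/setP => w'; rewrite !inE.
have [eqFF' | neFF'] := eqVneq F F'.
  by move: (E_unif FE); rewrite -(setIid F) {2}eqFF' FF' cards1 => K1; move: K_gt1; rewrite -K1.
by have := E_meet FE F'E neFF'; rewrite FF' cards1.
Qed.

Lemma red_two_zoned e v v' x : red e -> v \in e -> v' \in e -> v != v' ->
  zoned v -> zoned v' -> x \in e -> zoned x.
Proof.
case/orP => [/existsP [j /subsetP e_j] _ _ _ _ _ /e_j | ]; first by rewrite inE => /andP [].
case/existsP => u /existsP [F /and3P [_ _ /eqP ->]].
have inl_u y : y \in inl u |: [set inr w | w in F] -> zoned y -> y = inl u.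
  by rewrite in_setU1 => /orP [/eqP -> // | /imsetP [w _ ->]].
move=> /inl_u vu /inl_u v'u /eqP ne /vu ev /v'u ev'.
by case: ne; rewrite ev ev'.
Qed.

Section RedLoosePath.

Variables (q : nat) (f : 'I_(q * K).+1 -> U + W).
Hypotheses (q_gt1 : 1 < q) (f_inj : injective f)
  (f_red : forall e, e \in loose_path K.+1 (q * K).+1 -> red (f @: e))
  (zone_set_small : forall j, #|zone_set j| <= q * K)
  (zone_set_jB_small : #|zone_set jB| <= (q - 2) * K).

Let p x := f (inord x).
Let seg i : {set 'I_(q * K).+1} := [set v : 'I_(q * K).+1 | i * K <= v <= i * K + K].

Lemma path_inj x y : x <= q * K -> y <= q * K -> p x = p y -> x = y.
Proof. by move=> x_le y_le /f_inj /(congr1 (@nat_of_ord _)); rewrite !inordK. Qed.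

Lemma mem_seg x i : x <= q * K -> (p x \in f @: seg i) = (i * K <= x <= i * K + K).
Proof. by move=> x_le; rewrite mem_imset // inE inordK. Qed.

Lemma red_seg i : i < q -> red (f @: seg i).
Proof.
move=> i_lt; apply: f_red; apply/imsetP.
have i_lt' : i < ((q * K).+1 - 1) %/ (K.+1 - 1) by rewrite !subn1 /= mulnK.
by exists (Ordinal i_lt') => //=; rewrite subn1.
Qed.

Lemma segI i : i.+1 < q -> f @: seg i :&: f @: seg i.+1 = [set p (i.+1 * K)].
Proof.
move=> i_lt; rewrite -imsetI; last by move=> ? ? _ _; exact: f_inj.
have i_bound : i.+1 * K <= q * K by rewrite leq_pmul2r // ltnW.
suff -> : seg i :&: seg i.+1 = [set inord (i.+1 * K)] by exact: imset_set1.
apply/setP => v; rewrite !inE -val_eqE /= inordK ?mulSn; lia.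
Qed.

Lemma red_class_path x : x <= q * K -> red_class (p x) = red_class (p 0).
Proof.
elim: x => [//| x IHx] x_lt; rewrite -IHx; last exact: ltnW.
have i_lt : x %/ K < q by rewrite ltn_divLR.
move: (x %/ K) i_lt (leq_divM x K) (ltn_ceil x K_gt0) => i i_lt lo hi.
rewrite mulSn in hi.
by apply: (red_class_eq (red_seg i_lt)); rewrite mem_seg //; lia.
Qed.

Lemma shared_zoned i : 0 < i < q -> zoned (p (i * K)).
Proof.
case: i => [//| i] /= i_lt.
by apply: (red_meet_zoned (red_seg (ltnW i_lt)) (red_seg i_lt)); exact: segI.
Qed.

(* Vertices shared by consecutive edges are zoned, and a red edge containing two zoned
   vertices lies in a zone. *)
Lemma interior_zoned x : K <= x <= (q - 1) * K -> zoned (p x).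
Proof.
rewrite mulnBl mul1n => x_mid.
have qK : 2 * K <= q * K by rewrite leq_pmul2r.
move: (x %/ K) (x %% K) (divn_eq x K) (ltn_pmod x K_gt0) => i r x_eq r_lt.
have [r0 | r_gt0] := posnP r.
  rewrite x_eq r0 addn0; apply: shared_zoned.
  by apply/andP; split; rewrite -(ltn_pmul2r K_gt0); lia.
have i_gt0 : 0 < i by rewrite -(ltn_pmul2r K_gt0); lia.
have i_lt : i.+1 < q by rewrite -(ltn_pmul2r K_gt0) mulSn; lia.
have iK_le : i.+1 * K <= q * K by rewrite leq_pmul2r // ltnW.
rewrite mulSn in iK_le.
apply: (@red_two_zoned (f @: seg i) (p (i * K)) (p (i.+1 * K))).
- exact: red_seg (ltnW i_lt).
- by rewrite mem_seg; lia.
- by rewrite mem_seg mulSn; lia.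
- by apply/eqP => /path_inj; rewrite mulSn; lia.
- by apply: shared_zoned; rewrite i_gt0 /=; exact: ltnW.
- exact: shared_zoned.
- by rewrite mem_seg; lia.
Qed.

Lemma no_red_loose_path : False.
Proof.
have qK : 2 * K <= q * K by rewrite leq_pmul2r.
have q2K : (q - 2) * K = q * K - 2 * K by rewrite mulnBl.
have [c0 | c0] := eqVneq (red_class (p 0)) jB.
  pose X := [set p (K + d) | d : 'I_((q - 2) * K).+1].
  have X_jB : X \subset zone_set jB.
    apply/subsetP => _ /imsetP [[d /= d_lt] _ ->].
    rewrite -c0 -(red_class_path (x := K + d)); last by lia.
    by apply/zone_set_class/interior_zoned; rewrite mulnBl mul1n; lia.
  have := subset_leq_card X_jB; rewrite card_imset ?card_ord.
    by rewrite ltnNge zone_set_jB_small.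
  move=> [d d_lt] [d' d'_lt] /= eq_p; apply: val_inj => /=.
  by apply/(@addnI K)/(path_inj _ _ eq_p); lia.
have all_c : f @: setT \subset zone_set (red_class (p 0)).
  apply/subsetP => _ /imsetP [v _ ->]; have v_le : v <= q * K := ltn_ord v.
  have fv : f v = p v by rewrite /p inord_val.
  rewrite fv -(red_class_path v_le); apply: zone_set_class.
  by move: (red_class_path v_le) c0; case: (p v) => //= w <-; rewrite eqxx.
have := subset_leq_card all_c; rewrite card_imset // cardsT card_ord.
by rewrite ltnNge zone_set_small.
Qed.
End RedLoosePath.

Section BlueCopy.

Variables (l t : nat) (a : 'I_l.+1 -> nat) (g : part_vertex a -> U + W).
Hypotheses (g_inj : injective g) (g_blue : forall e, e \in H_graph K.+1 a -> ~~ red (g @: e))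
  (Z_small : #|Z| <= l) (a_big : forall i, i != ord_max -> #|Z| * (K - 1) + #|W| < a i)
  (a_last : a ord_max = t) (E_dense : indep_num E < t).

Let Zp i j := part a i :&: g @^-1: zone_set j.

Lemma zone_blocked i j x : K <= #|Zp i j| -> tag x != i -> g x \notin zone_set j.
Proof.
move=> /exists_subset_card [S S_Zp S_K] x_i; apply/negP => gx_j.
have /subsetP S_sub := S_Zp.
have S_i : S \subset part a i by apply/subsetP => y /S_sub /setIP [].
move/negP: (g_blue (H_graph_edge S_i S_K x_i)); apply.
rewrite /red; apply/orP; left; apply/existsP; exists j; apply/subsetP => _ /imsetP [y + ->].
by rewrite in_setU1 => /orP [/eqP -> // | /S_sub /setIP [_]]; rewrite inE.
Qed.

Lemma zone_owned j : exists2 i, i != ord_max & K <= #|Zp i j|.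
Proof.
have owner i : exists j, K <= #|Zp (lift ord_max i) j|.
  have := @a_big (lift ord_max i); rewrite eq_sym neq_lift -card_part.
  by case/(_ isT)/(pigeonhole_zones g_inj) => j0; rewrite subn1 prednK //; exists j0.
have [h hP] := fin_all_exists owner.
have h_inj : injective h.
  move=> i1 i2 h12; apply/eqP; apply: contraT => ne12.
  have /set0Pn [x] : Zp (lift ord_max i2) (h i2) != set0.
    by rewrite -card_gt0; exact: leq_trans K_gt0 (hP i2).
  rewrite !inE => /andP [/eqP x_i2 gx].
  have x_i1 : tag x != lift ord_max i1 by rewrite x_i2 (inj_eq (@lift_inj _ _)) eq_sym.
  by have := zone_blocked (hP i1) x_i1; rewrite h12 inE gx.
have [h' _ h'K] : bijective h by apply: inj_card_bij h_inj _; rewrite card_ord.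
exists (lift ord_max (h' j)); first by rewrite eq_sym neq_lift.
by have := hP (h' j); rewrite h'K.
Qed.

Lemma last_part_unzoned y : tag y = ord_max -> ~~ zoned (g y).
Proof.
move=> y_last; apply/negP => zy.
have [i i_max owned] := zone_owned (red_class (g y)).
have y_i : tag y != i by rewrite y_last eq_sym.
by move: (zone_blocked owned y_i); rewrite zone_set_class.
Qed.

Lemma no_blue_H : False.
Proof.
pose L := g @: part a ord_max.
have L_unzoned : L \subset [set v | ~~ zoned v].
  by apply/subsetP => _ /imsetP [y + ->]; rewrite !inE => /eqP /last_part_unzoned.
have [F FE F_L] : exists2 F, F \in E & F \subset inr @^-1: L.
  by apply: not_indep_of_card; rewrite card_preim_inr // card_imset // card_part a_last.
pose S := part a ord_max :&: g @^-1: [set inr w | w in F].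
have gS : g @: S = [set inr w | w in F].
  apply: imset_preimset_sub; apply/subsetP => _ /imsetP [w + ->].
  by move=> /(subsetP F_L); rewrite inE.
have S_K : #|S| = K by rewrite -(card_imset _ g_inj) gS card_imset ?E_unif //; exact: inr_inj.
have [i i_max owned] := zone_owned jB.
have /set0Pn [x] : Zp i jB != set0 by rewrite -card_gt0; exact: leq_trans K_gt0 owned.
rewrite !inE => /andP [/eqP x_i]; case gx : (g x) => [u | //] /= /eqP u_jB.
have x_max : tag x != ord_max by rewrite x_i.
move/negP: (g_blue (H_graph_edge (subsetIl _ _) S_K x_max)); apply.
rewrite imsetU1 gx gS /red; apply/orP; right; apply/existsP; exists u.
by apply/existsP; exists F; rewrite FE u_jB !eqxx.
Qed.
End BlueCopy.
End RedColouring.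

(* With n = qK+1: c clusters of n-1 = qK vertices and B = [ord_max] of n-2k+1 = (q-2)K. *)
Definition zone_size (c q K : nat) (j : 'I_c.+1) : nat :=
  if j == ord_max then (q - 2) * K else q * K.

Lemma card_host c q K (W : finType) :
  #|{: part_vertex (@zone_size c q K) + W}| = c * (q * K) + (q - 2) * K + #|W|.
Proof.
rewrite card_sum card_tagged sumnE big_map big_enum /= big_ord_recr /= card_ord.
rewrite /zone_size eqxx (eq_bigr (fun _ => q * K)) ?sum_nat_const ?card_ord // => i _.
by rewrite card_ord -val_eqE /= ltn_eqF.
Qed.

Lemma not_ramsey_arrows_host c q K t T (E : {set {set 'I_T}}) (a : 'I_c.+2 -> nat) N :
  1 < K -> 1 < q -> uniform K E -> no_one_intersection E -> indep_num E < t ->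
  (forall i, i != ord_max -> c.+1 * (K - 1) + T < a i) -> a ord_max = t ->
  N <= #|{: part_vertex (@zone_size c q K) + 'I_T}| ->
  ~ ramsey_arrows (loose_path K.+1 (q * K).+1) (H_graph K.+1 a) N.
Proof.
move=> K_gt1 q_gt1 E_unif E_meet E_dense a_big a_last N_le arrows.
pose emb (i : 'I_N) := enum_val (widen_ord N_le i).
have emb_inj : injective emb.
  by move=> i i' /enum_val_inj /(congr1 (@nat_of_ord _)) eq_ii'; exact: val_inj.
case: (arrows (fun e => red tag ord_max E (emb @: e))) => [[f [f_inj f_red]] | [g [g_inj g_blue]]].
  apply: (@no_red_loose_path _ _ _ tag ord_max K E K_gt1 E_unif E_meet q (emb \o f)) => //.
  - exact: inj_comp.
  - by move=> e /f_red; rewrite (imset_comp emb f).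
  - move=> j; rewrite card_zone_set card_part /zone_size; case: ifP => // _.
    by rewrite leq_mul2r leq_subr orbT.
  - by rewrite card_zone_set card_part /zone_size eqxx.
apply: (@no_blue_H _ _ _ tag ord_max K E K_gt1 E_unif c.+1 t a (emb \o g)) => //.
- exact: inj_comp.
- by move=> e /g_blue; rewrite (imset_comp emb g) => ->.
- by rewrite card_ord.
- by move=> i i_max; rewrite !card_ord; apply: a_big.
Qed.

Theorem proposition1p8 (k chi t n T : nat) (a : 'I_chi -> nat) :
  3 <= k -> 2 <= chi -> k - 1 <= t -> 3 * (k - 1) <= n ->
  n = 1 %[mod k - 1] ->
  is_tau (k - 1) t T ->
  (forall i : 'I_chi, i < chi - 1 -> (chi - 1) * (k - 2) + T < a i) ->
  (forall i : 'I_chi, i = chi - 1 :> nat -> a i = t) ->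
  forall N, ramsey_arrows (loose_path k n) (H_graph k a) N ->
    (chi - 1) * (n - 1) + T + 3 - 2 * k <= N.
Proof.
case: chi a => [|[|c]] a k_ge3 chi_ge2 //.
case: k k_ge3 => [|K] // K_gt1 _ n_ge n_mod [[E [E_unif E_indep E_meet]] _] a_big a_last N.
rewrite !subSS !subn0 in E_unif n_ge n_mod a_big a_last *.
have [q n_eq] : exists q, n = (q * K).+1.
  by exists (n %/ K); rewrite {1}(divn_eq n K) n_mod modn_small // addn1.
subst n.
have q_gt1 : 1 < q.
  by rewrite -(ltn_pmul2r (ltnW K_gt1)) mul1n; lia.
have qK : 2 * K <= q * K := leq_mul q_gt1 (leqnn K).
rewrite leqNgt; apply: contraPN => N_small.
apply: (not_ramsey_arrows_host K_gt1 q_gt1 E_unif E_meet E_indep) => //.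
- by move=> i i_max; apply: a_big; move: (ltn_ord i) i_max; rewrite -val_eqE /=; lia.
- exact: a_last.
- by rewrite card_host card_ord; move: N_small; rewrite mulSn mulnBl; lia.
Qed.
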